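(* Let $N_t, N_c, N_{RF}, K, N_s$ be positive integers with $K N_s \le N_{RF}$. Let $\theta_1,\dots,\theta_{N_c}\in\mathbb{R}$, let $\mathbf{c}=\frac{1}{\sqrt{N_c}}[e^{j\theta_1},\dots,e^{j\theta_{N_c}}]^T\in\mathbb{C}^{N_c}$, and let $\mathbf{C}=\mathrm{blkdiag}(\mathbf{c},\dots,\mathbf{c})\in\mathbb{C}^{N_cN_{RF}\times N_{RF}}$ be the block-diagonal matrix with $N_{RF}$ copies of $\mathbf{c}$ on its diagonal. Let $\mathbf{F}_{\mathrm{opt}}\in\mathbb{C}^{N_t\times KN_s}$, let $\mathbf{S}\in\{0,1\}^{N_t\times N_cN_{RF}}$, let $\alpha\in\mathbb{R}$, and let $\mathbf{F}_{\mathrm{DD}}\in\mathbb{C}^{N_{RF}\times KN_s}$ satisfy $\mathbf{F}_{\mathrm{DD}}^H\mathbf{F}_{\mathrm{DD}}=\mathbf{I}_{KN_s}$. Set $\mathbf{F}_{\mathrm{BB}}=\alpha\mathbf{F}_{\mathrm{DD}}$. Then $$\left\|\mathbf{F}_{\mathrm{opt}}-\mathbf{S}\mathbf{C}\mathbf{F}_{\mathrm{BB}}\right\|_F^2\le \left\|\mathbf{F}_{\mathrm{opt}}\right\|_F^2-2\alpha\,\Re\,\mathrm{tr}\!\left(\mathbf{F}_{\mathrm{DD}}\mathbf{F}_{\mathrm{opt}}^H\mathbf{S}\mathbf{C}\right)+\alpha^2\left\|\mathbf{S}\right\|_F^2 .$$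
   Context: $j$ denotes the imaginary unit, $(\cdot)^H$ the conjugate transpose, $\|\cdot\|_F$ the Frobenius norm, $\mathrm{tr}$ the trace and $\Re$ the real part. In the application, $\mathbf{S}\mathbf{C}$ is the analog precoder built from $N_c$ fixed phase shifters and a binary switch matrix $\mathbf{S}$, and $\mathbf{F}_{\mathrm{opt}}$ is a fully digital precoder to be approximated. *)

From HB Require Import structures.
From mathcomp Require Import all_boot all_order all_algebra.
From mathcomp Require Import reals trigo.
From mathcomp Require Import complex.
Set Implicit Arguments. Unset Strict Implicit. Unset Printing Implicit Defensive.
Import Order.TTheory GRing.Theory Num.Theory.
Local Open Scope ring_scope.

Definition cexpj {R : realType} (t : R) : R[i] := Complex (cos t) (sin t).

Definition ctrmx {R : rcfType} {m n : nat} (A : 'M[R[i]]_(m, n)) : 'M[R[i]]_(n, m) :=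
  map_mx (@conjc R) A^T.

Definition frob2 {R : rcfType} {m n : nat} (A : 'M[R[i]]_(m, n)) : R :=
  \sum_(i < m) \sum_(j < n) ((complex.Re (A i j)) ^+ 2 + (complex.Im (A i j)) ^+ 2).

Definition cvec {R : realType} {Nc : nat} (theta : 'I_Nc -> R) : 'cV[R[i]]_Nc :=
  \col_(a < Nc) ((((Num.sqrt (Nc%:R : R))^-1)%:C)%C * cexpj (theta a)).

Definition blkdiag {R : rcfType} {m : nat} (n : nat) (c : 'cV[R[i]]_m)
  : 'M[R[i]]_(m * n, n) :=
  \matrix_(i < m * n, k < n)
    \sum_(a < m) (if (i : nat) == (k * m + a)%N then c a ord0 else 0).

(* Expanding the square reproduces the right-hand side, except that the
   quadratic term is alpha^2 ||S C F_DD||^2 instead of alpha^2 ||S||^2.  Both C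
   (its columns are disjoint copies of the unit vector c) and F_DD have
   orthonormal columns, and right multiplication by such a matrix Q cannot
   increase the Frobenius norm, since B = B Q Q^H + B (1 - Q Q^H) is an
   orthogonal decomposition. *)
From HB Require Import structures.
From mathcomp Require Import all_boot all_order all_algebra.
From mathcomp Require Import reals trigo.
From mathcomp Require Import complex.
From mathcomp Require Import zify ring.
Set Implicit Arguments. Unset Strict Implicit. Unset Printing Implicit Defensive.
Import Order.TTheory GRing.Theory Num.Theory.
Local Open Scope ring_scope.

Lemma sum_ord_if_eq (V : nmodType) N n (x : V) : (n < N)%N ->
  \sum_(i < N) (if (i : nat) == n then x else 0) = x.
Proof.
move=> ltnN; rewrite (bigD1 (Ordinal ltnN)) //= eqxx big1 ?addr0 // => i neq_i.
by case: eqP => // eq_i; case/eqP: neq_i; apply: val_inj.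
Qed.

Lemma eqn_mulnDl_small m k l a b : (a < m)%N -> (b < m)%N ->
  (k * m + a == l * m + b)%N = (k == l) && (a == b).
Proof.
move=> ltam ltbm; apply/eqP/andP => [eq_kl|[/eqP -> /eqP ->]] //.
have eq_ab : a = b by move: (congr1 (modn^~ m) eq_kl); rewrite !modnMDl !modn_small.
by subst b; split => //; move/eqP: eq_kl; rewrite eqn_add2r eqn_pmul2r //; lia.
Qed.

Section ConjugateTranspose.
Variable R : rcfType.

Lemma ctrmxM m n p (A : 'M[R[i]]_(m, n)) (B : 'M[R[i]]_(n, p)) :
  ctrmx (A *m B) = ctrmx B *m ctrmx A.
Proof. by rewrite /ctrmx trmx_mul map_mxM. Qed.

Lemma ctrmxB m n (A B : 'M[R[i]]_(m, n)) : ctrmx (A - B) = ctrmx A - ctrmx B.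
Proof. by rewrite /ctrmx linearB map_mxB. Qed.

Lemma ctrmxK m n : cancel (@ctrmx R m n) (@ctrmx R n m).
Proof.
by move=> A; rewrite /ctrmx map_trmx trmxK -map_mx_comp map_mx_id // => x; apply: conjcK.
Qed.

Lemma ctrmx1 n : ctrmx (1%:M : 'M[R[i]]_n) = 1%:M.
Proof. by rewrite /ctrmx trmx1 map_mx1. Qed.

End ConjugateTranspose.

Section Frobenius.
Variable R : rcfType.

Lemma frob2E m n (A : 'M[R[i]]_(m, n)) : frob2 A = complex.Re (\tr (A *m ctrmx A)).
Proof.
rewrite /frob2 /mxtrace raddf_sum; apply: eq_bigr => i _.
rewrite mxE raddf_sum; apply: eq_bigr => j _.
by rewrite !mxE; case: (A i j) => x y /=; rewrite mulrN opprK !expr2.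
Qed.

Lemma frob2_ge0 m n (A : 'M[R[i]]_(m, n)) : 0 <= frob2 A.
Proof. by apply/sumr_ge0 => i _; apply/sumr_ge0 => j _; rewrite addr_ge0 ?sqr_ge0. Qed.

Lemma frob2_subZ m n (a : R) (F G : 'M[R[i]]_(m, n)) :
  frob2 (F - (a%:C)%C *: G)
  = frob2 F - 2 * a * complex.Re (\tr (G *m ctrmx F)) + a ^+ 2 * frob2 G.
Proof.
rewrite /frob2 /mxtrace raddf_sum !mulr_sumr -sumrB -big_split; apply: eq_bigr => i _.
rewrite mxE raddf_sum !mulr_sumr -sumrB -big_split; apply: eq_bigr => j _.
by rewrite !mxE; case: (F i j) => x y; case: (G i j) => u v /=; ring.
Qed.

Lemma frob2_mulmx_isometry_le m n p (B : 'M[R[i]]_(m, n)) (Q : 'M[R[i]]_(n, p)) :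
  ctrmx Q *m Q = 1%:M -> frob2 (B *m Q) <= frob2 B.
Proof.
move=> isoQ; set P := 1%:M - Q *m ctrmx Q.
have P_herm : ctrmx P = P by rewrite ctrmxB ctrmx1 ctrmxM ctrmxK.
have P_idem : P *m P = P.
  by rewrite mulmxBl mul1mx mulmxBr mulmx1 mulmxA -(mulmxA Q) isoQ mulmx1 subrr subr0.
have pythagoras : frob2 B = frob2 (B *m Q) + frob2 (B *m P).
  rewrite !frob2E -raddfD -mxtraceD !ctrmxM P_herm -!mulmxA (mulmxA P) P_idem.
  by rewrite (mulmxA Q) -mulmxDr -mulmxDl /P addrC subrK mul1mx.
by rewrite pythagoras lerDl frob2_ge0.
Qed.

End Frobenius.

Lemma blkdiag_isometry (R : rcfType) m n (c : 'cV[R[i]]_m) :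
  ctrmx c *m c = 1%:M -> ctrmx (blkdiag n c) *m blkdiag n c = 1%:M.
Proof.
move=> /matrixP/(_ ord0 ord0); rewrite !mxE eqxx => unit_c.
have lt_idx (k : 'I_n) (a : 'I_m) : (k * m + a < m * n)%N.
  by have := ltn_ord k; have := ltn_ord a; nia.
have mul_conj_if (i p q : nat) (x y : R[i]) :
    conjc (if i == p then x else 0) * (if i == q then y else 0)
    = if i == p then (if p == q then conjc x * y else 0) else 0.
  by case: eqP => [->|_]; [case: eqP; rewrite ?mulr0 | rewrite rmorph0 mul0r].
apply/matrixP => k l; rewrite !mxE.
transitivity (\sum_(a < m) \sum_(b < m)
  (if (k * m + a == l * m + b)%N then conjc (c a ord0) * c b ord0 else 0)).
  under eq_bigr => i _ do rewrite !mxE rmorph_sum mulr_suml; rewrite exchange_big.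
  apply: eq_bigr => a _; under eq_bigr => i _ do rewrite mulr_sumr; rewrite exchange_big.
  apply: eq_bigr => b _; under eq_bigr => i _ do rewrite mul_conj_if.
  exact: sum_ord_if_eq.
under eq_bigr => a _ do under eq_bigr => b _ do rewrite eqn_mulnDl_small //.
have [/val_inj <- | neq_kl] := eqVneq (k : nat) l; last first.
  rewrite [k == l](negbTE neq_kl) big1 // => a _.
  by rewrite big1 // => b _; rewrite (negbTE neq_kl).
rewrite !eqxx -unit_c; apply: eq_bigr => a _.
rewrite (bigD1 a) //= eqxx big1 ?addr0 ?mxE // => b neq_ba.
by case: eqP => // /val_inj eq_ab; rewrite eq_ab eqxx in neq_ba.
Qed.

Lemma cvec_unit (R : realType) Nc (theta : 'I_Nc -> R) : (0 < Nc)%N ->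
  ctrmx (cvec theta) *m cvec theta = 1%:M.
Proof.
move=> Nc_gt0; set s := (Num.sqrt (Nc%:R : R))^-1.
have s2 : s ^+ 2 = (Nc%:R)^-1 by rewrite exprVn sqr_sqrtr ?ler0n.
have entry_sqr a : ctrmx (cvec theta) ord0 a * cvec theta a ord0 = ((Nc%:R)^-1)%:C%C.
  have -> : (Nc%:R)^-1 = s ^+ 2 * (cos (theta a) ^+ 2 + sin (theta a) ^+ 2).
    by rewrite cos2Dsin2 mulr1.
  by rewrite !mxE -/s; apply/eqP; rewrite eq_complex /=; apply/andP; split; apply/eqP; ring.
apply/matrixP => i j; rewrite !ord1 !mxE eqxx.
under eq_bigr => a _ do rewrite entry_sqr.
by rewrite sumr_const card_ord -raddfMn /= -[X in X%:C%C]mulr_natr mulVf // pnatr_eq0 -lt0n.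
Qed.

Theorem lemma1 (R : realType) (Nt Nc NRF K Ns : nat)
  (hNt : (0 < Nt)%N) (hNc : (0 < Nc)%N) (hNRF : (0 < NRF)%N)
  (hK : (0 < K)%N) (hNs : (0 < Ns)%N) (hKNs : (K * Ns <= NRF)%N)
  (theta : 'I_Nc -> R)
  (Fopt : 'M[R[i]]_(Nt, K * Ns))
  (S : 'M[R[i]]_(Nt, Nc * NRF))
  (hS : forall i j, S i j = 0 \/ S i j = 1)
  (alpha : R)
  (FDD : 'M[R[i]]_(NRF, K * Ns))
  (hFDD : ctrmx FDD *m FDD = 1%:M) :
  let C := blkdiag NRF (cvec theta) in
  let FBB := (alpha%:C)%C *: FDD in
  frob2 (Fopt - S *m C *m FBB)
  <= frob2 Fopt
     - 2 * alpha * complex.Re (\tr (FDD *m ctrmx Fopt *m S *m C))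
     + alpha ^+ 2 * frob2 S.
Proof.
cbv zeta; set C := blkdiag NRF (cvec theta).
have isoC : ctrmx C *m C = 1%:M := blkdiag_isometry _ (cvec_unit theta hNc).
rewrite -scalemxAr.
have -> : \tr (FDD *m ctrmx Fopt *m S *m C) = \tr (S *m C *m FDD *m ctrmx Fopt).
  by rewrite -(mulmxA _ S) mxtrace_mulC !mulmxA.
rewrite frob2_subZ lerD2l ler_wpM2l ?sqr_ge0 //.
exact: le_trans (frob2_mulmx_isometry_le _ hFDD) (frob2_mulmx_isometry_le _ isoC).
Qed.
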